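(* Let $n=n(\theta)$ be positive integers with $n\to\infty$ and $\theta/n\to\infty$ as $\theta\to\infty$. Let $K_n(\theta)$ be a random variable with $P\{K_n(\theta)=k\}=|S_n^k|\theta^k/\theta_{(n)}$, $k=1,\dots,n$, where $\theta_{(n)}=\theta(\theta+1)\cdots(\theta+n-1)$ and $|S_n^k|$ is the coefficient of $\theta^k$ in $\theta_{(n)}$. Then, as $\theta\to\infty$, the family of laws of $K_n(\theta)/n$ satisfies an LDP on $[0,1]$ with speed $n\log\frac\theta n$ and rate function $I(x)=1-x$.
   Context: $K_n(\theta)$ is the number of distinct alleles in a sample of size $n$ from a $PD(\theta)$ population. An LDP with speed $a(\theta)$ uses normalization $a(\theta)^{-1}\log$ as $\theta\to\infty$. *)

From HB Require Import structures.
From mathcomp Require Import all_boot all_order all_algebra.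
From mathcomp Require Import all_classical all_reals all_analysis.
Set Implicit Arguments. Unset Strict Implicit. Unset Printing Implicit Defensive.
Import Order.TTheory GRing.Theory Num.Theory.
Import numFieldNormedType.Exports.
Local Open Scope classical_set_scope.
Local Open Scope ring_scope.

Definition pochhammer (R : pzRingType) (t : R) (n : nat) : R :=
  \prod_(i < n) (t + i%:R).

Definition stirling1 (R : nzRingType) (n k : nat) : R :=
  (\prod_(i < n) ('X + (i%:R)%:P) : {poly R})`_k.

(* P{ K_n(theta)/n \in A } where P{K_n(theta)=k} = |S_n^k| theta^k / theta_(n),
   k = 1..n. *)
Definition Kprob (R : realFieldType) (n : nat) (t : R) (A : set R) : R :=
  \sum_(1 <= k < n.+1)
     (if `[< A (k%:R / n%:R) >] then stirling1 R n k * t ^+ k / pochhammer t n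
      else 0).

(* Large deviation principle, as theta -> +oo, on the state space [0,1]
   (with its subspace topology from R), for the family of laws P t,
   with speed a and rate function I.  The limsup/liminf bounds
     limsup a(t)^-1 log P_t(F) <= - inf_F I    (F closed in [0,1])
     liminf a(t)^-1 log P_t(G) >= - inf_G I    (G open in [0,1])
   are written in their standard unfolded (epsilon) form, avoiding log 0. *)
Definition LDP01 (R : realType) (P : R -> set R -> R) (a : R -> R)
  (I : R -> R) : Prop :=
  [/\
      (forall x, 0 <= x <= 1 -> 0 <= I x),
      (forall c : R, closed [set x | 0 <= x <= 1 /\ I x <= c]),
      (forall (C : set R) (c : R), closed C ->
         (forall x, C x -> 0 <= x <= 1 -> c <= I x) ->
         forall eps : R, 0 < eps ->
         \forall t \near +oo%R, P t C <= expR (- ((c - eps) * a t)))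
    &
      (forall (O : set R) (x : R), open O -> O x -> 0 <= x <= 1 ->
         forall eps : R, 0 < eps ->
         \forall t \near +oo%R, expR (- ((I x + eps) * a t)) <= P t O)].

From HB Require Import structures.
From mathcomp Require Import all_boot all_order all_algebra.
From mathcomp Require Import all_classical all_reals all_analysis.
From mathcomp Require Import ring lra.
Import Order.TTheory GRing.Theory Num.Theory.
Import numFieldNormedType.Exports.
Local Open Scope classical_set_scope.
Local Open Scope ring_scope.

(* Write r = t / n.  Once n <= t, every summand p_k = |S_n^k| t^k / t_(n)
   of the law of K_n(t) satisfies
     e^(-2n) r^(-(n-k)) <= p_k <= 2^n r^(-(n-k)):
   above, |S_n^k| n^k <= n_(n) <= (2n)^n and t_(n) >= t^n; below,
   n! <= |S_n^k| n^k, n^n <= n! e^n and t_(n) <= (2t)^n.  The factors n, 2^n,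
   e^n are at most e^(2n), which is negligible against r^(eps n) as soon as
   eps log r >= 2.  Summing over k/n in C gives the upper bound; the single
   summand with x <= k/n <= x + 1/n gives the lower bound. *)

Lemma fact_leq_expn m n : (m <= n)%N -> (m`! <= n ^ m)%N.
Proof. by elim: m => [|m IH] mn //; rewrite factS expnS leq_mul // IH // ltnW. Qed.

Lemma expr2_le_expR {R : realType} n : 2 ^+ n <= expR (n%:R : R).
Proof.
rewrite -[X in expR X]mulr1 expRM_natl lerXn2r ?nnegrE ?expR_ge0 //.
by have := expR_ge1Dx (1 : R).
Qed.

Lemma expr_nat_le_fact_expR {R : realType} n :
  n%:R ^+ n <= n`!%:R * expR (n%:R : R).
Proof.
case: n => [|n]; first by rewrite expr0 mul1r expR0.
rewrite mulrC -ler_pdivrMr ?ltr0n ?fact_gt0 //.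
by apply: le_trans (expR_ge1Dxn n _); rewrite ?lerDr.
Qed.

Lemma expR_natmul_ln {R : realType} (r : R) m :
  0 < r -> expR (m%:R * ln r) = r ^+ m.
Proof. by move=> r0; rewrite expRM_natl lnK. Qed.

Section Stirling.
Context {R : numDomainType}.

Lemma stirling1S n k : stirling1 R n.+1 k =
  (if k == 0%N then 0 else stirling1 R n k.-1) + stirling1 R n k * n%:R.
Proof. by rewrite /stirling1 big_ord_recr /= mulrDr coefD coefMX coefMC. Qed.

Lemma stirling10 k : stirling1 R 0 k = (k == 0%N)%:R.
Proof. by rewrite /stirling1 big_ord0 coefE. Qed.

Lemma stirling1_ge0 n k : 0 <= stirling1 R n k.
Proof.
elim: n k => [|n IH] k; first by rewrite stirling10; case: (k == 0%N).
by rewrite stirling1S addr_ge0 ?mulr_ge0 //; case: (k == 0%N).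
Qed.

Lemma stirling1_diag_ge1 n : 1 <= stirling1 R n n.
Proof.
elim: n => [|n IH]; first by rewrite stirling10.
by rewrite stirling1S /= (le_trans IH) // lerDl mulr_ge0 ?stirling1_ge0.
Qed.

Lemma stirling1_fact_ge n k : (1 <= k <= n)%N ->
  (n.-1)`!%:R <= stirling1 R n k * (k.-1)`!%:R.
Proof.
elim: n k => [|n IH] k; first by case: k.
case/andP=> k1; rewrite leq_eqVlt => /orP[/eqP -> | kn].
  by rewrite /= ler_peMl // stirling1_diag_ge1.
have {}IH : ((n.-1)`!%:R <= stirling1 R n k * (k.-1)`!%:R :> R).
  by apply: IH; rewrite k1 -ltnS.
case: n IH kn => [|n] IH kn; first by case: k k1 kn {IH} => [|[]].
rewrite stirling1S factS natrM /= mulrDl ler_wpDl //.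
  by rewrite mulr_ge0 //; case: (k == 0%N); rewrite ?stirling1_ge0.
by rewrite mulrAC mulrC ler_wpM2r.
Qed.

Lemma pochhammerS (t : R) n : pochhammer t n.+1 = pochhammer t n * (t + n%:R).
Proof. by rewrite /pochhammer big_ord_recr. Qed.

Lemma pochhammer_ge_expr (t : R) n : 0 <= t -> t ^+ n <= pochhammer t n.
Proof.
move=> t0; rewrite /pochhammer -[X in t ^+ X](card_ord n) -prodr_const.
by apply: ler_prod => i _; rewrite t0 /= lerDl.
Qed.

Lemma pochhammer_gt0 (t : R) n : 0 < t -> 0 < pochhammer t n.
Proof.
by move=> t0; apply: lt_le_trans (pochhammer_ge_expr t n (ltW t0)); rewrite exprn_gt0.
Qed.

Lemma pochhammer_le_expr (t : R) n : n%:R <= t -> pochhammer t n <= (2 * t) ^+ n.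
Proof.
move=> nt; have t0 : 0 <= t by apply: le_trans nt.
rewrite /pochhammer -[X in _ ^+ X](card_ord n) -prodr_const.
apply: ler_prod => i _; rewrite addr_ge0 //= mulr2n mulrDl mul1r lerD2l.
by rewrite (le_trans _ nt) // ler_nat ltnW.
Qed.

Lemma stirling1_mul_expr_le n k (t : R) : 0 <= t ->
  stirling1 R n k * t ^+ k <= pochhammer t n.
Proof.
move=> t0; elim: n k => [|n IH] k.
  by rewrite stirling10 /pochhammer big_ord0; case: k => [|k] /=;
    rewrite ?expr0 ?mulr1 ?mul0r.
rewrite stirling1S pochhammerS mulrDl mulrDr lerD //; last first.
  by rewrite mulrAC ler_wpM2r.
case: k => [|k] /=.
  rewrite mul0r mulr_ge0 ?addr_ge0 //.
  by rewrite (le_trans _ (pochhammer_ge_expr t n t0)) ?exprn_ge0.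
by rewrite exprS mulrCA [X in _ <= X]mulrC ler_wpM2l.
Qed.

Lemma stirling1_le_expr n k : (k <= n)%N ->
  stirling1 R n k <= 2 ^+ n * n%:R ^+ (n - k).
Proof.
case: n => [|n] kn.
  by move: kn; rewrite leqn0 => /eqP->; rewrite stirling10 !expr0 mulr1.
have N0 : 0 < n.+1%:R :> R by rewrite ltr0n.
have := le_trans (stirling1_mul_expr_le n.+1 k _ (ltW N0))
                 (pochhammer_le_expr _ _ (lexx n.+1%:R)).
rewrite exprMn.
have -> : n.+1%:R ^+ n.+1 = n.+1%:R ^+ k * n.+1%:R ^+ (n.+1 - k) :> R.
  by rewrite -exprD subnKC.
rewrite mulrCA [X in _ <= X]mulrC.
by rewrite ler_pM2r // exprn_gt0.
Qed.

End Stirling.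

Lemma stirling1_ge_expr {R : realType} n k : (1 <= k <= n)%N ->
  n%:R ^+ (n - k) <= stirling1 R n k * expR (n%:R : R).
Proof.
move=> k1n; have /andP[k1 kn] := k1n; have n0 : (0 < n)%N by apply: leq_trans kn.
have N0 : 0 < n%:R :> R by rewrite ltr0n.
(* n! = n (n-1)! <= n |S_n^k| (k-1)! <= |S_n^k| n^k *)
have fact_le : n`!%:R <= stirling1 R n k * n%:R ^+ k.
  have kfact : (k.-1)`!%:R <= n%:R ^+ k.-1 :> R.
    by rewrite -natrX ler_nat fact_leq_expn // (leq_trans (leq_pred k)).
  have := le_trans (stirling1_fact_ge _ _ k1n)
                   (ler_wpM2l (stirling1_ge0 _ _) kfact).
  rewrite -(prednK n0) factS natrM prednK // -(prednK k1) exprS prednK //.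
  by rewrite mulrCA; apply: ler_wpM2l; rewrite ltW.
have := le_trans (expr_nat_le_fact_expR n) (ler_wpM2r (expR_ge0 _) fact_le).
have -> : n%:R ^+ n = n%:R ^+ k * n%:R ^+ (n - k) :> R by rewrite -exprD subnKC.
rewrite mulrAC [X in _ <= X]mulrC.
by rewrite ler_pM2l ?exprn_gt0.
Qed.

Lemma exists_frac_window {R : archiFieldType} n (x : R) :
  (0 < n)%N -> 0 <= x <= 1 ->
  exists2 k, (1 <= k <= n)%N & x <= k%:R / n%:R <= x + n%:R^-1.
Proof.
move=> n0 /andP[x0 x1]; have N0 : 0 < n%:R :> R by rewrite ltr0n.
have /andP[nx_ge nx_lt] := truncn_itv (mulr_ge0 (ltW N0) x0).
set j := Num.trunc (n%:R * x) in nx_ge nx_lt.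
exists (minn n j.+1); first by rewrite leq_min n0 geq_minl.
rewrite ler_pdivlMr // ler_pdivrMr // mulrDl mulVf ?lt0r_neq0 // ![_ * n%:R]mulrC.
apply/andP; split.
  case: (leqP n j.+1) => [_|_]; last exact: ltW.
  by rewrite -[X in _ <= X]mulr1 ler_wpM2l // ltW.
by rewrite (le_trans (_ : _ <= j.+1%:R)) ?ler_nat ?geq_minr // -natr1 lerD2r.
Qed.

Section KprobBounds.
Context {R : realType} {n : nat} {t : R}.
Hypotheses (n_gt0 : (0 < n)%N) (n_le_t : n%:R <= t).

Let n_gt0R : 0 < n%:R :> R. Proof. by rewrite ltr0n. Qed.

Let t_gt0 : 0 < t. Proof. exact: lt_le_trans n_le_t. Qed.

Let ln_ratio_ge0 : 0 <= ln (t / n%:R).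
Proof. by rewrite ln_ge0 // ler_pdivlMr // mul1r. Qed.

Lemma Kterm_le_expR k : (k <= n)%N ->
  stirling1 R n k * t ^+ k / pochhammer t n
    <= expR (n%:R - (n - k)%:R * ln (t / n%:R)).
Proof.
move=> kn.
have tn : t ^+ n = t ^+ k * t ^+ (n - k) by rewrite -exprD subnKC.
apply: (@le_trans _ _ (stirling1 R n k * t ^+ k / t ^+ n)).
  apply: ler_wpM2l; first by rewrite mulr_ge0 ?stirling1_ge0 ?exprn_ge0 ?ltW.
  by rewrite lef_pV2 ?posrE ?exprn_gt0 ?pochhammer_gt0 ?pochhammer_ge_expr ?ltW.
have -> : stirling1 R n k * t ^+ k / t ^+ n = stirling1 R n k / t ^+ (n - k).
  by rewrite tn; field; rewrite !expf_neq0 ?lt0r_neq0.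
rewrite expRB expR_natmul_ln ?divr_gt0 //.
apply: (@le_trans _ _ (2 ^+ n * n%:R ^+ (n - k) / t ^+ (n - k))).
  by apply: ler_wpM2r; [rewrite invr_ge0 exprn_ge0 // ltW | exact: stirling1_le_expr].
rewrite expr_div_n invf_div mulrA.
apply: ler_wpM2r; first by rewrite invr_ge0 exprn_ge0 // ltW.
by apply: ler_wpM2r; [rewrite exprn_ge0 // ltW | exact: expr2_le_expR].
Qed.

Lemma Kterm_ge_expR k : (1 <= k <= n)%N ->
  expR (- (2 * n%:R) - (n - k)%:R * ln (t / n%:R))
    <= stirling1 R n k * t ^+ k / pochhammer t n.
Proof.
move=> k1n; have /andP[k1 kn] := k1n.
have S0 := stirling1_ge0 n k.
apply: (@le_trans _ _ (stirling1 R n k / 2 ^+ n / t ^+ (n - k))); last first.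
  have -> : stirling1 R n k / 2 ^+ n / t ^+ (n - k)
            = stirling1 R n k * t ^+ k / (2 * t) ^+ n.
    have tn : t ^+ n = t ^+ k * t ^+ (n - k) by rewrite -exprD subnKC.
    rewrite exprMn tn; field.
    by rewrite !expf_neq0 ?lt0r_neq0.
  apply: ler_wpM2l; first by rewrite mulr_ge0 // exprn_ge0 // ltW.
  by rewrite lef_pV2 ?posrE ?exprn_gt0 ?mulr_gt0 ?pochhammer_gt0 ?pochhammer_le_expr.
rewrite expRB expR_natmul_ln ?divr_gt0 // expr_div_n invf_div mulrA.
apply: ler_wpM2r; first by rewrite invr_ge0 exprn_ge0 // ltW.
rewrite ler_pdivlMr ?exprn_gt0 //.
apply: (@le_trans _ _
  (expR (- (2 * n%:R)) * (stirling1 R n k * expR n%:R) * expR n%:R)).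
  apply: ler_pM; rewrite ?exprn_ge0 ?mulr_ge0 ?expR_ge0 ?expr2_le_expR //.
  by apply: ler_wpM2l; [exact: expR_ge0 | exact: stirling1_ge_expr].
have -> : expR (- (2 * n%:R)) * (stirling1 R n k * expR n%:R) * expR n%:R
          = stirling1 R n k * expR (- (2 * n%:R) + n%:R + n%:R) :> R.
  by rewrite !expRD; ring.
suff -> : - (2 * n%:R) + n%:R + n%:R = 0 :> R by rewrite expR0 mulr1.
by ring.
Qed.

Lemma Kprob_le_expR (C : set R) c :
  (forall x, C x -> 0 <= x <= 1 -> c <= 1 - x) ->
  Kprob n t C <= expR (2 * n%:R - c * (n%:R * ln (t / n%:R))).
Proof.
move=> hC; rewrite /Kprob; have L0 := ln_ratio_ge0.
set L := ln (t / n%:R) in L0 *.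
apply: (le_trans (ler_sum_nat (G := fun _ => expR (n%:R - c * (n%:R * L))) _)).
  move=> k /andP[k1 kn]; rewrite ltnS in kn.
  case: asboolP => [Ck|_]; last exact: expR_ge0.
  apply: le_trans (Kterm_le_expR k kn) _.
  rewrite ler_expR lerD2l lerN2 mulrA ler_wpM2r //.
  have : c <= 1 - k%:R / n%:R.
    by apply: hC; rewrite // divr_ge0 //= ler_pdivrMr // mul1r ler_nat.
  by rewrite natrB // -ler_pdivlMr // mulrBl divff ?lt0r_neq0.
have -> : 2 * n%:R - c * (n%:R * L) = n%:R + (n%:R - c * (n%:R * L)) by ring.
rewrite sumr_const_nat subSS subn0 -[expR _ *+ n]mulr_natl [in X in _ <= X]expRD.
apply: ler_wpM2r; first exact: expR_ge0.
by apply: le_trans (expR_ge1Dx _); rewrite lerDr.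
Qed.

Lemma Kprob_ge_expR (O : set R) x : 0 <= x <= 1 ->
  (forall y, x <= y <= x + n%:R^-1 -> O y) ->
  expR (- (2 * n%:R) - (1 - x) * (n%:R * ln (t / n%:R))) <= Kprob n t O.
Proof.
move=> x01 hO.
have [k k1n /[dup] /hO Ok /andP[xk _]] := exists_frac_window _ _ n_gt0 x01.
have /andP[k1 kn] := k1n.
rewrite /Kprob (bigD1_seq k) ?iota_uniq ?mem_index_iota ?k1 ?ltnS //=.
rewrite asboolT // -[X in X <= _]addr0 lerD //; last first.
  apply: sumr_ge0 => i _; case: asboolP => // _.
  by rewrite divr_ge0 ?mulr_ge0 ?stirling1_ge0 ?exprn_ge0 ?ltW ?pochhammer_gt0.
apply: le_trans (Kterm_ge_expR k k1n).
rewrite ler_expR lerD2l lerN2 mulrA ler_wpM2r ?ln_ratio_ge0 //.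
rewrite natrB // mulrBl mul1r lerD2l lerN2.
by rewrite -ler_pdivlMr.
Qed.

End KprobBounds.

Lemma closed_one_minus_sublevel {R : realType} (c : R) :
  closed [set x : R | 0 <= x <= 1 /\ 1 - x <= c].
Proof.
have -> : [set x : R | 0 <= x <= 1 /\ 1 - x <= c] =
          [set x | 0 <= x] `&` [set x | x <= 1] `&` [set x | 1 - c <= x].
  by apply/seteqP; split => x /=; rewrite lerBlDr addrC -lerBlDr;
    [case=> /andP[-> ->] | case=> -[-> ->]].
by apply: closedI; [apply: closedI|];
  [exact: closed_ge | exact: closed_le | exact: closed_ge].
Qed.

Lemma large_ratio_bounds {R : realType} {n : nat} {t eps : R} :
  (0 < n)%N -> 0 < eps -> expR (2 / eps) <= t / n%:R ->
  n%:R <= t /\ 2 * n%:R <= eps * (n%:R * ln (t / n%:R)).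
Proof.
move=> n0 e0 h; have N0 : 0 < n%:R :> R by rewrite ltr0n.
have r1 : 1 <= t / n%:R by apply: le_trans h; rewrite -expR0 ler_expR divr_ge0 ?ltW.
split; first by rewrite ler_pdivlMr // mul1r in r1.
have : 2 <= eps * ln (t / n%:R).
  by rewrite mulrC -ler_pdivrMr // -ler_expR lnK // posrE (lt_le_trans ltr01).
by rewrite mulrCA [2 * _]mulrC ler_pM2l.
Qed.

Theorem theorem4p3 (R : realType) (n : R -> nat)
  (n_pos : forall t : R, (0 < n t)%N)
  (n_to_oo : (fun t : R => (n t)%:R : R) @ +oo%R --> +oo%R)
  (ratio_to_oo : (fun t : R => t / (n t)%:R) @ +oo%R --> +oo%R) :
  LDP01 (fun (t : R) (A : set R) => Kprob (n t) t A)
        (fun t : R => (n t)%:R * ln (t / (n t)%:R))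
        (fun x : R => 1 - x).
Proof.
move/cvgryPge: ratio_to_oo => ratio_ge; move/cvgryPgt: n_to_oo => n_gt.
split.
- by move=> x /andP[_ x1]; rewrite subr_ge0.
- exact: closed_one_minus_sublevel.
- move=> C c _ hC eps e0; apply: filterS (ratio_ge (expR (2 / eps))) => t.
  move=> /(large_ratio_bounds (n_pos t) e0) [nt speed].
  apply: le_trans (Kprob_le_expR (n_pos t) nt C c hC) _.
  by rewrite ler_expR; lra.
- move=> O x /[swap] Ox /(_ x Ox) /nbhs_ballP [d d0 hd] x01 eps e0.
  apply: filterS2 (ratio_ge (expR (2 / eps))) (n_gt d^-1) => t.
  move=> /(large_ratio_bounds (n_pos t) e0) [nt speed] nd.
  apply: le_trans (Kprob_ge_expR (n_pos t) nt O x x01 _).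
    by rewrite ler_expR; lra.
  have n_inv_lt : (n t)%:R^-1 < d.
    by rewrite -[d]invrK ltf_pV2 ?posrE ?invr_gt0 ?ltr0n.
  move=> y /andP[xy yx]; apply: hd; rewrite /ball /= ltr_norml; apply/andP; split; lra.
Qed.
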